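(* Let $\mathbb P$ be the law of a stationary simple point process on $\mathbb R^d$ with finite positive intensity $m$, and let $\gamma>0$. The following are equivalent: (i) $\mathbb E_0[\xi(\Lambda_L(z))^\gamma]<\infty$ for every $L>0$ and $z\in\mathbb R^d$; (ii) $\rho_{1+\gamma}<\infty$.
   Context: $\mathcal N$ = locally finite subsets of $\mathbb R^d$, identified with counting measures ($\xi(A)=\#(\xi\cap A)$); $\tau_x\xi=\xi-x$; stationarity: $\mathbb P(\tau_xA)=\mathbb P(A)$. Intensity $m=\mathbb E[\xi([0,1]^d)]$. $\Lambda_L(z)=z+[-L,L]^d$. $\rho_\gamma:=\mathbb E[\xi([0,1]^d)^\gamma]$. Palm distribution $\mathbb P_0(A)=\frac1m\int d\mathbb P(\xi)\sum_{x\in\xi\cap[0,1]^d}\mathbf 1_A(\tau_x\xi)$, expectation $\mathbb E_0$. *)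

From HB Require Import structures.
From mathcomp Require Import all_boot all_order all_algebra.
From mathcomp Require Import all_classical all_reals all_analysis.
Set Implicit Arguments. Unset Strict Implicit. Unset Printing Implicit Defensive.
Import Order.TTheory GRing.Theory Num.Theory.
Local Open Scope classical_set_scope.
Local Open Scope ring_scope.

Section PP.
Variables (R : realType) (d : nat).

Definition pt := 'rV[R]_d.

(* configurations: subsets of R^d (simple point configurations) *)
Definition cfg := set pt.

Definition box (a b : pt) : set pt :=
  [set v | forall i : 'I_d, a ord0 i <= v ord0 i <= b ord0 i].

Definition Lambda (L : R) (z : pt) : set pt :=
  [set v | forall i : 'I_d, z ord0 i - L <= v ord0 i <= z ord0 i + L].

Definition unit_cube : set pt :=
  [set v | forall i : 'I_d, 0 <= v ord0 i <= 1].

Definition bounded_set (A : set pt) : Prop := exists L : R, A `<=` Lambda L 0.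

Definition locally_finite (xi : cfg) : Prop :=
  forall A : set pt, bounded_set A -> finite_set (xi `&` A).

(* xi(A) = #(xi \cap A), in \bar R (+oo if infinite) *)
Definition cnt (xi : cfg) (A : set pt) : \bar R := counting (xi `&` A).

Definition tau (x : pt) (xi : cfg) : cfg := [set y - x | y in xi].

Definition cfg_gen : set (set cfg) :=
  [set S | exists (a b : pt) (k : \bar R), S = [set xi | cnt xi (box a b) = k]].

Definition cfgT := g_sigma_algebraType cfg_gen.

Local Open Scope ereal_scope.

Definition palmE (P : probability cfgT R) (m : R) (f : cfg -> \bar R) : \bar R :=
  (m^-1)%:E * \int[P]_(xi in setT) (\esum_(x in (xi `&` unit_cube)) f (tau x xi)).

Definition rho (P : probability cfgT R) (g : R) : \bar R :=
  \int[P]_(xi in setT) (poweR (cnt xi unit_cube) g).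

End PP.

(* For x in the unit cube, xi(Lambda_L(z) + x) is squeezed between xi([0,1]^d)
   (when L = 1, z = 0, as [0,1]^d is inside Lambda_1(x)) and xi(Lambda_M(0)) for
   M large enough.  Since the Palm sum has xi([0,1]^d) terms, it therefore lies
   between xi([0,1]^d)^(1+g) and xi(Lambda_M(0))^(1+g).  Covering Lambda_M(0) by
   n translates of the unit cube and using (sum_j a_j)^p <= n^p sum_j a_j^p, the
   expectation of the upper bound is at most n^(1+g) * n * rho_(1+g), because by
   stationarity every translate has the same (1+g)-th moment as [0,1]^d. *)

From HB Require Import structures.
From mathcomp Require Import all_boot all_order all_algebra finmap.
From mathcomp Require Import all_classical all_reals all_analysis.
From mathcomp Require Import measurable_realfun.
From mathcomp Require Import lra.
Set Implicit Arguments.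
Unset Strict Implicit.
Unset Printing Implicit Defensive.
Import Order.TTheory GRing.Theory Num.Theory.
Local Open Scope classical_set_scope.
Local Open Scope ring_scope.

Section extended_reals.
Local Open Scope ereal_scope.
Context (R : realType).
Implicit Types (x y : \bar R) (p : R).

Lemma pmulEFin_lty (c : R) x : (0 < c)%R -> (c%:E * x < +oo) = (x < +oo).
Proof.
by move=> c0; case: x => [r||]; rewrite ?ltry ?gt0_muley ?gt0_muleNy ?ltNyr.
Qed.

Lemma lee_poweR p x y : (0 <= p)%R -> 0 <= x -> x <= y -> x `^ p <= y `^ p.
Proof.
move=> p0 x0 xy; apply: gt0_ler_poweR; rewrite ?in_itv/= ?leey ?andbT//.
exact: le_trans xy.
Qed.

Lemma poweR1D x p : 0 <= x -> (1 + p != 0)%R -> x `^ (1 + p) = x * x `^ p.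
Proof. by move=> x0 p1; rewrite poweRD ?add_neq0_poweRD_def// poweRe1. Qed.

Lemma poweR_maxe_le x y p : (0 < p)%R -> 0 <= x -> 0 <= y ->
  maxe x y `^ p <= x `^ p + y `^ p.
Proof.
move=> p0 x0 y0; rewrite maxEle; case: ifP => _.
  by rewrite leeDr ?poweR_ge0.
by rewrite leeDl ?poweR_ge0.
Qed.

(* Compare both sides with [(n * max_j a j)^p], where [n = size s]. *)
Lemma poweR_sum_le (I : eqType) (s : seq I) (a : I -> \bar R) p : (0 < p)%R ->
  (forall j, 0 <= a j) ->
  (\sum_(j <- s) a j) `^ p <= (size s)%:R%:E `^ p * \sum_(j <- s) a j `^ p.
Proof.
move=> p0 a0.
have max_ge0 (r : seq I) : 0 <= \big[maxe/0]_(j <- r) a j.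
  by elim/big_ind: _ => // x y x0 y0; rewrite le_max x0.
set M := \big[maxe/0]_(j <- s) a j.
have sum_le : \sum_(j <- s) a j <= (size s)%:R%:E * M.
  have -> : (size s)%:R%:E * M = \sum_(j <- s) M.
    by rewrite big_const_seq count_predT iter_addr adde0 mule_natl.
  by rewrite !big_seq; apply: lee_sum => j js; exact: le_bigmax_seq.
have max_le : M `^ p <= \sum_(j <- s) a j `^ p.
  rewrite /M {M sum_le}; elim: s => [|j s IH].
    by rewrite !big_nil poweR0r ?gt_eqF.
  rewrite !big_cons; apply: le_trans (poweR_maxe_le p0 (a0 j) (max_ge0 s)) _.
  exact: leeD2l.
apply: le_trans (lee_poweR (ltW p0) (sume_ge0 _ _) sum_le) _ => [j _|]; first exact: a0.
by rewrite poweRM ?lee_fin ?max_ge0// lee_wpmul2l ?poweR_ge0.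
Qed.

End extended_reals.

Section counting.
Local Open Scope ereal_scope.
Context {R : realType}.

Lemma counting_ge0 (T : choiceType) (A : set T) : 0 <= @counting T R A.
Proof. by rewrite /counting; case: ifPn; rewrite ?lee_fin ?leey. Qed.

Lemma counting_infinite (T : choiceType) (A : set T) :
  infinite_set A -> @counting T R A = +oo.
Proof. by move=> infA; rewrite /counting asboolF. Qed.

Lemma counting_finite (T : choiceType) (A : set T) : finite_set A ->
  @counting T R A = (#|` fset_set A|)%fset%:R%:E.
Proof. by move=> finA; rewrite /counting asboolT. Qed.

Lemma le_counting (T : choiceType) (A B : set T) :
  A `<=` B -> @counting T R A <= @counting T R B.
Proof.
move=> AB; have [finB|infB] := pselect (finite_set B); last first.
  by rewrite [X in _ <= X]counting_infinite ?leey.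
have finA := sub_finite_set AB finB.
rewrite !counting_finite// lee_fin ler_nat fsubset_leq_card//.
by rewrite -fset_set_sub.
Qed.

Lemma counting_image_le (T U : choiceType) (f : T -> U) (A : set T) :
  @counting U R (f @` A) <= @counting T R A.
Proof.
have [finA|infA] := pselect (finite_set A).
  rewrite (counting_finite (finite_image f finA)) counting_finite//.
  by rewrite lee_fin ler_nat fset_set_image// leq_imfset_card.
by rewrite [X in _ <= X]counting_infinite ?leey.
Qed.

Lemma counting_setU (T : choiceType) (A B : set T) :
  @counting T R (A `|` B) <= @counting T R A + @counting T R B.
Proof.
have counting_neqNy (C : set T) : @counting T R C != -oo.
  by rewrite gt_eqF// (lt_le_trans ltNy0 (counting_ge0 _)).
have [finA|infA] := pselect (finite_set A); last first.
  by rewrite [counting A]counting_infinite// addye ?leey ?counting_neqNy.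
have [finB|infB] := pselect (finite_set B); last first.
  by rewrite [counting B]counting_infinite// addey ?leey ?counting_neqNy.
rewrite !counting_finite ?finite_setU// fset_setU// cardfsU -EFinD lee_fin.
by rewrite -natrD ler_nat leq_subr.
Qed.

Lemma counting_bigsetU (T : choiceType) (I : Type) (s : seq I) (F : I -> set T) :
  @counting T R (\big[setU/set0]_(j <- s) F j) <= \sum_(j <- s) @counting T R (F j).
Proof.
elim: s => [|j s IH]; first by rewrite !big_nil counting_finite// fset_set0.
by rewrite !big_cons; apply: le_trans (counting_setU _ _) _; exact: leeD2l.
Qed.

Lemma fsume_cst (T : choiceType) (A : set T) (c : \bar R) : finite_set A ->
  \sum_(x \in A) c = (#|` fset_set A|)%fset%:R%:E * c.
Proof.
by move=> finA; rewrite fsbig_finite// big_const_seq count_predT iter_addr adde0 mule_natl.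
Qed.

Lemma esum_le_counting (T : choiceType) (A : set T) (f : T -> \bar R) (c : \bar R) :
  0 <= c -> (forall x, A x -> 0 <= f x <= c) ->
  \esum_(x in A) f x <= @counting T R A * c.
Proof.
move=> c0 fc; have [finA|infA] := pselect (finite_set A).
  rewrite esum_fset//; last by move=> x /set_mem /fc /andP[].
  rewrite counting_finite// -fsume_cst//.
  by apply: lee_fsum => // x /fc /andP[].
rewrite counting_infinite//; have [c00|c_neq0] := eqVneq c 0.
  rewrite c00 mule0 esum1// => x /fc; rewrite c00 => fx0.
  by apply/eqP; rewrite eq_le andbC.
by rewrite gt0_mulye ?leey// lt_def c_neq0.
Qed.

(* On an infinite set the weights are [+oo], so a single term already gives [+oo]. *)
Lemma powe_counting_le_esum (T : choiceType) (A : set T) (f : T -> \bar R) (g : R) :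
  (0 < g)%R -> (forall x, A x -> @counting T R A `^ g <= f x) ->
  @counting T R A `^ (1 + g) <= \esum_(x in A) f x.
Proof.
move=> g0 fA; have [finA|infA] := pselect (finite_set A).
  rewrite esum_fset//; last by move=> x /set_mem /fA; apply: le_trans; exact: poweR_ge0.
  rewrite poweR1D ?counting_ge0 ?gt_eqF ?addr_gt0// [X in X * _]counting_finite//.
  by rewrite -fsume_cst//; apply: lee_fsum => // x /fA.
have [x Ax] : A !=set0 by apply/set0P/eqP => A0; apply: infA; rewrite A0.
rewrite counting_infinite// poweRyr ?gt_eqF ?addr_gt0//.
have := fA x Ax; rewrite counting_infinite// poweRyr ?gt_eqF// => /le_trans; apply.
apply: esum_ge; exists [set x]; last by rewrite fsbig_set1.
by split; [exact: finite_set1 | move=> y ->].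
Qed.

End counting.

(* No measurability is needed: the integral of a nonnegative function is a
   supremum over the simple functions below it. *)
Lemma ge0_le_integralT d (T : measurableType d) (R : realType)
    (mu : {measure set T -> \bar R}) (f g : T -> \bar R) :
  (forall x, 0 <= f x)%E -> (forall x, f x <= g x)%E ->
  (\int[mu]_(x in setT) f x <= \int[mu]_(x in setT) g x)%E.
Proof.
move=> f0 fg; have g0 x : (0 <= g x)%E by exact: le_trans (f0 x) (fg x).
rewrite !ge0_integralTE//; apply: ereal_sup_le => _ [h hf <-].
by exists h => // x; exact: le_trans (hf x) (fg x).
Qed.

Lemma measurable_fun_enat d (T : measurableType d) (R : realType) (f : T -> \bar R) :
  (forall t, f t = +oo%E \/ exists n : nat, f t = n%:R%:E) ->
  (forall k, measurable (f @^-1` [set k])) -> measurable_fun setT f.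
Proof.
move=> fE mf _ Y _; rewrite setTI.
have mfY k : measurable (f @^-1` (Y `&` [set k])).
  have [Yk|nYk] := pselect (Y k); first by rewrite setIidr// => y ->.
  rewrite (_ : Y `&` _ = set0) ?preimage_set0//.
  by rewrite -subset0 => y [Yy yk]; apply: nYk; rewrite -yk.
suff -> : f @^-1` Y =
    f @^-1` (Y `&` [set +oo%E]) `|` \bigcup_n f @^-1` (Y `&` [set n%:R%:E]).
  by apply: measurableU => //; exact: bigcupT_measurable.
apply/seteqP; split=> [t Yt|t [[Yt _]|[n _ [Yt _]]] //].
by case: (fE t) => [ftoo|[n ftn]]; [left | right; exists n].
Qed.

Section translation.
Context (R : realType) (d : nat).
Local Notation pt := (pt R d).
Implicit Types (x z a b : pt) (A B : set pt).

Lemma tauE x A : tau x A = [set v | A (v + x)].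
Proof.
apply/seteqP; split=> [_ [y Ay <-]|v Avx]; first by rewrite /= subrK.
by exists (v + x); rewrite ?addrK.
Qed.

Lemma tauK x : cancel (tau x) (tau (- x)).
Proof. by move=> A; rewrite !tauE; apply/seteqP; split=> v /=; rewrite addrNK. Qed.

Lemma tauNK x : cancel (tau (- x)) (tau x).
Proof. by move=> A; rewrite -{1}(opprK x) tauK. Qed.

Lemma tau_setI x A B : tau x (A `&` B) = tau x A `&` tau x B.
Proof. by rewrite !tauE. Qed.

Lemma counting_tau x A : @counting _ R (tau x A) = counting A.
Proof.
apply/eqP; rewrite eq_le counting_image_le /=.
by rewrite -{1}(tauK x A) counting_image_le.
Qed.

Lemma cnt_tau x (xi : cfg R d) A : cnt (tau x xi) A = cnt xi (tau (- x) A).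
Proof. by rewrite /cnt -{1}(tauNK x A) -tau_setI counting_tau. Qed.

Lemma tau_box x a b : tau x (box a b) = box (a - x) (b - x).
Proof.
rewrite tauE; apply/seteqP; split=> v /= h i; have := h i; rewrite !mxE;
  by rewrite !lerBlDr ?lerBrDr.
Qed.

Lemma tau_Lambda x L z : tau x (Lambda L z) = Lambda L (z - x).
Proof.
rewrite tauE; apply/seteqP; split=> v /= h i; have := h i; rewrite !mxE => /andP[h1 h2];
  apply/andP; split; lra.
Qed.

Lemma unit_cube_box : @unit_cube R d = box 0 (const_mx 1).
Proof. by apply/seteqP; split=> v /= h i; have := h i; rewrite !mxE. Qed.

End translation.

(* [j : grid d M] indexes the unit cube with lowest corner [(j i - M)_i], so that
   these cubes cover [Lambda M 0]. *)
Notation grid d M := {ffun 'I_d -> 'I_(M + M).+1}.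

Section cubes.
Context (R : realType) (d : nat).
Local Notation pt := (pt R d).
Local Notation unit_cube := (@unit_cube R d).

Lemma unit_cube_sub_Lambda1 (x : pt) : unit_cube x -> unit_cube `<=` Lambda 1 x.
Proof.
move=> cx v cv i; have /andP[? ?] := cx i; have /andP[? ?] := cv i.
by apply/andP; split; lra.
Qed.

Lemma exists_nat_coord_bound (z : pt) (L : R) : 0 <= L ->
  exists N : nat, forall i, `|z ord0 i| + L + 1 <= N.+1%:R.
Proof.
move=> L0; exists (Num.truncn (\sum_i (`|z ord0 i| + L + 1))) => i.
apply: le_trans (ltW (truncnS_gt _)); rewrite (bigD1 i)//= lerDl.
by apply: sumr_ge0 => k _; have := normr_ge0 (z ord0 k); lra.
Qed.

Definition corner (M : nat) (j : grid d M) : pt := \row_i ((j i)%:R - M%:R).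

Lemma Lambda_cover (M : nat) (v : pt) :
  Lambda M%:R 0 v -> exists j : grid d M, unit_cube (v - corner j).
Proof.
move=> hv; exists [ffun i => inord (Num.truncn (v ord0 i + M%:R))] => i.
have /andP[] := hv i; rewrite !mxE sub0r add0r => vlo vhi.
have v0 : 0 <= v ord0 i + M%:R by lra.
have trunc_lt : (Num.truncn (v ord0 i + M%:R) < (M + M).+1)%N.
  by rewrite truncn_lt_nat// -[(M + M).+1]addn1 !natrD; lra.
rewrite ffunE inordK//; have /andP[t1] := truncn_itv v0.
by rewrite -[(Num.truncn _).+1]addn1 natrD => t2; apply/andP; split; lra.
Qed.

End cubes.
Arguments corner {R d M} j.

Section palm_bounds.
Context (R : realType) (d : nat).
Local Notation pt := (pt R d).
Local Notation unit_cube := (@unit_cube R d).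
Implicit Types (xi : cfg R d) (g : R).

Lemma esum_palm_ge xi g : 0 < g ->
  (cnt xi unit_cube `^ (1 + g) <=
   \esum_(x in xi `&` unit_cube) cnt (tau x xi) (Lambda 1 0)%R `^ g)%E.
Proof.
move=> g0; apply: powe_counting_le_esum => // x [_ cube_x].
rewrite cnt_tau tau_Lambda sub0r opprK.
apply: lee_poweR; rewrite ?(ltW g0) ?counting_ge0//.
by apply: le_counting; apply: setIS; exact: unit_cube_sub_Lambda1.
Qed.

Lemma esum_palm_le xi (L M : R) (z : pt) g : 0 < g -> 1 <= M ->
  (forall i, `|z ord0 i| + L + 1 <= M) ->
  (\esum_(x in xi `&` unit_cube) cnt (tau x xi) (Lambda L z) `^ g <=
   cnt xi (Lambda M 0)%R `^ (1 + g))%E.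
Proof.
move=> g0 M1 zLM; set S := cnt xi (Lambda M 0).
have S0 : (0 <= S)%E by exact: counting_ge0.
apply: le_trans (esum_le_counting (c := S `^ g) _ _) _ => [|x [_ cube_x]|].
- exact: poweR_ge0.
- rewrite poweR_ge0 cnt_tau tau_Lambda opprK /=.
  apply: lee_poweR; rewrite ?(ltW g0) ?counting_ge0//.
  apply: le_counting; apply: setIS => v Lv i; have := Lv i; rewrite !mxE.
  have := zLM i; have /andP[? ?] := cube_x i.
  have := ler_norm (z ord0 i); have := ler_norm (- z ord0 i); rewrite normrN.
  by move=> ? ? ? /andP[? ?]; rewrite !sub0r !add0r; apply/andP; split; lra.
- rewrite poweR1D ?gt_eqF ?addr_gt0//; apply: lee_wpmul2r; first exact: poweR_ge0.
  apply: le_counting; apply: setIS => v cube_v i; have /andP[? ?] := cube_v i.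
  by rewrite mxE; apply/andP; split; lra.
Qed.

Lemma cnt_Lambda_le_cubes xi (M : nat) :
  (cnt xi (Lambda M%:R 0)%R <=
   \sum_(j <- enum (grid d M)) cnt (tau (corner j) xi) unit_cube)%E.
Proof.
under eq_bigr do rewrite cnt_tau.
apply: le_trans (counting_bigsetU _ (fun j => xi `&` tau (- corner j) unit_cube)).
rewrite -bigcup_seq; apply: le_counting => v [xiv /Lambda_cover[j cube_j]].
by exists j; rewrite /= ?mem_enum// tauE.
Qed.

Lemma esum_palm_le_cubes xi (L : R) (z : pt) (N : nat) g : 0 < g ->
  (forall i, `|z ord0 i| + L + 1 <= N.+1%:R) ->
  (\esum_(x in xi `&` unit_cube) cnt (tau x xi) (Lambda L z) `^ g <=
   (size (enum (grid d N.+1)))%:R%:E `^ (1 + g) *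
   \sum_(j <- enum (grid d N.+1)) cnt (tau (corner j) xi) unit_cube `^ (1 + g))%E.
Proof.
move=> g0 zLN; apply: le_trans (esum_palm_le _ g0 _ zLN) _; first by rewrite ler1n.
apply: le_trans (lee_poweR _ (counting_ge0 _) (cnt_Lambda_le_cubes xi N.+1)) _.
  by rewrite ltW// addr_gt0.
by apply: poweR_sum_le => [|j]; rewrite ?addr_gt0 ?counting_ge0.
Qed.

End palm_bounds.

Section stationary.
Context (R : realType) (d : nat) (P : probability (cfgT R d) R).
Hypothesis Pstat : forall (x : pt R d) (A : set (cfgT R d)), measurable A ->
  P (tau x @` A) = P A.

Lemma measurable_cnt_box (a b : pt R d) :
  measurable_fun setT (fun xi : cfgT R d => cnt xi (box a b)).
Proof.
apply: measurable_fun_enat => [xi|k].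
  by rewrite /cnt /counting; case: ifP => _; [right; eexists | left].
by apply: sub_sigma_algebra; exists a, b, k.
Qed.

Lemma measurable_tau (x : pt R d) :
  measurable_fun setT (tau x : cfgT R d -> cfgT R d).
Proof.
apply: (@measurability _ _ (cfgT R d) (cfgT R d) setT _ (@cfg_gen R d)) => //.
move=> _ [_ [a [b [k ->]]] <-].
rewrite setTI; apply: sub_sigma_algebra; exists (a + x), (b + x), k.
by apply/seteqP; split=> xi /=; rewrite cnt_tau tau_box !opprK.
Qed.

Lemma preimage_tau (x : pt R d) (A : set (cfgT R d)) :
  tau x @^-1` A = tau (- x) @` A.
Proof.
apply/seteqP; split=> [xi Axi|_ [xi Axi <-]]; last by rewrite /= tauNK.
by exists (tau x xi); rewrite ?tauK.
Qed.

Lemma integral_tau (x : pt R d) (f : cfgT R d -> \bar R) :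
  measurable_fun setT f -> (forall xi, 0 <= f xi)%E ->
  (\int[P]_(xi in setT) f (tau x xi) = \int[P]_(xi in setT) f xi)%E.
Proof.
move=> mf f0; pose taux : cfgT R d -> cfgT R d := tau x.
have := ge0_integral_pushforward (measurable_tau x) P measurableT mf (fun y _ => f0 y).
rewrite preimage_setT => <-.
apply: (@eq_measure_integral _ _ _ _ P (pushforward P taux)) => [|mtau A mA _].
  exact: measurable_tau.
by rewrite /pushforward /taux /= -(Pstat (- x) mA) -(preimage_tau x A).
Qed.

Lemma measurable_powe_cnt_cube (p : R) :
  measurable_fun setT (fun xi : cfgT R d => cnt xi (@unit_cube R d) `^ p)%E.
Proof.
apply: measurableT_comp (measurable_poweR _) _.
by rewrite unit_cube_box; exact: measurable_cnt_box.
Qed.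

Lemma integral_powe_cnt_cube_tau (x : pt R d) (p : R) :
  (\int[P]_(xi in setT) cnt (tau x xi) (@unit_cube R d) `^ p)%E = rho P p.
Proof.
rewrite (@integral_tau x (fun xi => cnt xi (@unit_cube R d) `^ p)%E) //.
  exact: measurable_powe_cnt_cube.
by move=> xi; exact: poweR_ge0.
Qed.

Lemma palmE_lty (m : R) (f : cfg R d -> \bar R) : 0 < m ->
  (palmE P m f < +oo)%E =
  (\int[P]_(xi in setT) (\esum_(x in xi `&` @unit_cube R d) f (tau x xi)) < +oo)%E.
Proof. by move=> m0; rewrite /palmE pmulEFin_lty ?invr_gt0. Qed.

Lemma rho_le_palm_integral (g : R) : 0 < g ->
  (rho P (1 + g) <= \int[P]_(xi in setT)
     \esum_(x in xi `&` @unit_cube R d) cnt (tau x xi) (Lambda 1 0)%R `^ g)%E.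
Proof.
move=> g0; apply: ge0_le_integralT => xi; first exact: poweR_ge0.
exact: esum_palm_ge.
Qed.

Lemma palm_integral_lty (L : R) (z : pt R d) (g : R) : 0 < L -> 0 < g ->
  (rho P (1 + g) < +oo)%E ->
  (\int[P]_(xi in setT)
     (\esum_(x in xi `&` @unit_cube R d) cnt (tau x xi) (Lambda L z) `^ g) < +oo)%E.
Proof.
move=> L0 g0 rho_fin; have [N zLN] := exists_nat_coord_bound z (ltW L0).
apply: le_lt_trans; first apply: ge0_le_integralT => xi.
- by apply: esum_ge0 => x _; exact: poweR_ge0.
- exact: esum_palm_le_cubes g0 zLN.
have cube_ge0 (j : grid d N.+1) (xi : cfgT R d) :
  (0 <= cnt (tau (corner j) xi) (@unit_cube R d) `^ (1 + g))%E by exact: poweR_ge0.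
have m_cube (j : grid d N.+1) : measurable_fun setT
    (fun xi : cfgT R d => cnt (tau (corner j) xi) (@unit_cube R d) `^ (1 + g))%E.
  exact: measurableT_comp (measurable_powe_cnt_cube _) (measurable_tau _).
rewrite ge0_integralZl ?poweR_ge0//; last 2 first.
- exact: emeasurable_sum.
- by move=> xi _; exact: sume_ge0.
rewrite ge0_integral_sum//; under eq_bigr do rewrite integral_powe_cnt_cube_tau.
by rewrite lte_mul_pinfty ?poweR_ge0 ?poweR_EFin// lte_sum_pinfty.
Qed.

End stationary.

Theorem lemma8p3 (R : realType) (d : nat) (d_gt0 : (0 < d)%N)
  (P : probability (cfgT R d) R) (m : R) (g : R)
  (* P is the law of a point process: P-a.s. locally finite configurations *)
  (Plf : {ae P, forall xi : cfgT R d, locally_finite xi})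
  (* stationarity: P(tau_x A) = P(A) *)
  (Pstat : forall (x : pt R d) (A : set (cfgT R d)), measurable A ->
      P (tau x @` A) = P A)
  (* intensity m = E[xi([0,1]^d)], finite and positive *)
  (Pint : (\int[P]_(xi in setT) cnt xi (@unit_cube R d))%E = m%:E)
  (m_gt0 : 0 < m)
  (g_gt0 : 0 < g) :
  (forall (L : R) (z : pt R d), 0 < L ->
      (palmE P m (fun xi => poweR (cnt xi (Lambda L z)) g) < +oo)%E)
  <-> (rho P (1 + g) < +oo)%E.
Proof.
split=> [/(_ 1 0 ltr01)|rho_fin L z L_gt0]; rewrite palmE_lty//.
  by apply: le_lt_trans; exact: rho_le_palm_integral.
exact: palm_integral_lty.
Qed.
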